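(* Let $H$ be a separable infinite-dimensional complex Hilbert space, $\ell^2=\ell^2(\mathbb{Z}_+)$, and $\mathcal{H}=\ell^2(\mathbb{Z}_+,H)=(\bigoplus_{n\in\mathbb{Z}_+}H)_{\ell^2}$. Let $B$ be the backward shift on $\ell^2$, $B(x_0,x_1,\dots)=(x_1,x_2,\dots)$, and $B_\infty$ the backward shift on $\mathcal{H}$, $B_\infty(x_0,x_1,\dots)=(x_1,x_2,\dots)$ with $x_n\in H$; $B^*$ and $B_\infty^*$ are their adjoints (the forward shifts). Then: (i) $L_B$ and $R_{B^*}$ are universal operators on $\mathcal{C}_2(\ell^2)$, and $L_{B_\infty}$ and $R_{B_\infty^*}$ are universal operators on $\mathcal{C}_2(\mathcal{H})$; (ii) $(L_B,R_{B^*})$ is not a universal commuting pair on $\mathcal{C}_2(\ell^2)$; (iii) $(L_{B_\infty},R_{B_\infty^*})$ is a universal commuting pair on $\mathcal{C}_2(\mathcal{H})$.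
   Context: For a separable Hilbert space $K$, $\mathcal{C}_2(K)$ is the Hilbert space of Hilbert–Schmidt operators on $K$ with the Hilbert–Schmidt norm $\|T\|_2=(\sum_n\|Tf_n\|^2)^{1/2}$ for an orthonormal basis $(f_n)$. For $U\in\mathcal{L}(K)$, $L_U(S)=US$ and $R_U(S)=SU$ for $S\in\mathcal{C}_2(K)$; these are bounded operators on $\mathcal{C}_2(K)$ and $L_U$, $R_V$ commute. An operator $U$ on a separable infinite-dimensional Hilbert space $E$ is universal if for every $T\in\mathcal{L}(E)$ there exist a closed $U$-invariant subspace $M\subset E$ and $c\neq0$ such that $U|_M$ is similar to $cT$ (i.e. $U|_M=J^{-1}(cT)J$ for some linear isomorphism $J:M\to E$). A commuting pair $(U_1,U_2)\in\mathcal{L}(E)^2$ is a universal commuting pair if for every commuting pair $(S_1,S_2)\in\mathcal{L}(E)^2$ there exist $c\neq0$, a closed subspace $M\subset E$ invariant under both $U_1,U_2$, and a linear isomorphism $V:E\to M$ with $U_1V=cVS_1$ and $U_2V=cVS_2$. *)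

From HB Require Import structures.
From mathcomp Require Import all_boot all_order all_algebra.
From mathcomp Require Import complex.
From mathcomp Require Import all_classical all_reals all_analysis.
Set Implicit Arguments. Unset Strict Implicit. Unset Printing Implicit Defensive.
Import Order.TTheory GRing.Theory Num.Theory.
Import numFieldNormedType.Exports.
Local Open Scope classical_set_scope.
Local Open Scope ring_scope.

Section L2.
Variable R : realType.
Local Notation C := (R[i]).

Definition sqmod (z : C) : R := (complex.Re z) ^+ 2 + (complex.Im z) ^+ 2.

Definition cconj (z : C) : C := complex.Complex (complex.Re z) (- complex.Im z).

Definition is_l2 {I : choiceType} (f : I -> C) : Prop :=
  (\esum_(i in [set: I]) ((sqmod (f i))%:E) < +oo)%E.

Definition l2norm {I : choiceType} (f : I -> C) : R :=
  Num.sqrt (fine (\esum_(i in [set: I]) ((sqmod (f i))%:E))).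

Definition vlin {I : Type} (a : C) (f g : I -> C) : I -> C := fun i => a * f i + g i.
Definition vscale {I : Type} (a : C) (f : I -> C) : I -> C := fun i => a * f i.
Definition vsub {I : Type} (f g : I -> C) : I -> C := fun i => f i - g i.
Definition vzero {I : Type} : I -> C := fun _ => 0.

Section Ops.
Variable I : choiceType.
Local Notation vec := (I -> C).

Definition lin_on (D : set vec) (T : vec -> vec) : Prop :=
  forall a f g, D f -> D g -> T (vlin a f g) = vlin a (T f) (T g).

(** bounded linear operators on l^2(I) (only their values on l^2(I) matter) *)
Definition bounded_op (T : vec -> vec) : Prop :=
  [/\ forall f, is_l2 f -> is_l2 (T f),
      lin_on is_l2 T &
      exists k : R, forall f, is_l2 f -> l2norm (T f) <= k * l2norm f].

Definition closed_subspace (M : set vec) : Prop :=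
  [/\ M `<=` is_l2, M vzero,
      (forall a f g, M f -> M g -> M (vlin a f g)) &
      (forall (u : nat -> vec) (x : vec), (forall n, M (u n)) -> is_l2 x ->
         (fun n => l2norm (vsub (u n) x)) @ \oo --> (0 : R) -> M x)].

Definition invariant (U : vec -> vec) (M : set vec) : Prop :=
  forall f, M f -> M (U f).

Definition lin_iso (D1 D2 : set vec) (J : vec -> vec) : Prop :=
  [/\ forall f, D1 f -> D2 (J f),
      lin_on D1 J,
      (forall g, D2 g -> exists2 f, D1 f & J f = g) &
      exists k1 k2 : R, forall f, D1 f ->
         l2norm (J f) <= k1 * l2norm f /\ l2norm f <= k2 * l2norm (J f)].

Definition universal (U : vec -> vec) : Prop :=
  bounded_op U /\
  forall T, bounded_op T ->
    exists (M : set vec) (c : C) (J : vec -> vec),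
      [/\ closed_subspace M, invariant U M, c != 0, lin_iso M is_l2 J &
          forall f, M f -> J (U f) = vscale c (T (J f))].

Definition commuting_pair (U1 U2 : vec -> vec) : Prop :=
  [/\ bounded_op U1, bounded_op U2 &
      forall f, is_l2 f -> U1 (U2 f) = U2 (U1 f)].

Definition universal_commuting_pair (U1 U2 : vec -> vec) : Prop :=
  commuting_pair U1 U2 /\
  forall S1 S2, commuting_pair S1 S2 ->
    exists (c : C) (M : set vec) (V : vec -> vec),
      [/\ c != 0, closed_subspace M, invariant U1 M /\ invariant U2 M,
          lin_iso is_l2 M V &
          forall f, is_l2 f ->
            U1 (V f) = vscale c (V (S1 f)) /\ U2 (V f) = vscale c (V (S2 f))].
End Ops.

(** Hilbert–Schmidt operators on K = l^2(I) are represented by their matrices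
    s(i,j) = <S e_j, e_i>; this identifies C_2(l^2(I)) isometrically with
    l^2(I * I). *)
Section HS.
Variable I : choiceType.

(** L_U(S) = U S : the j-th column of U S is U applied to the j-th column of S. *)
Definition Lmul (U : (I -> C) -> (I -> C)) (s : I * I -> C) : I * I -> C :=
  fun p => U (fun k => s (k, p.2)) p.1.

Definition adjmx (s : I * I -> C) : I * I -> C := fun p => cconj (s (p.2, p.1)).

(** R_{V^*}(S) = S V^* = (V S^* )^* . *)
Definition Radj (V : (I -> C) -> (I -> C)) (s : I * I -> C) : I * I -> C :=
  adjmx (Lmul V (adjmx s)).
End HS.

Definition bshift (x : nat -> C) : nat -> C := fun n => x n.+1.

(** backward shift B_oo on l^2(Z_+, H) with H = l^2(Z_+): a vector (x_n)_n
    with x_n in H is represented by x(n,k) = k-th coordinate of x_n. *)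
Definition bshift_inf (x : nat * nat -> C) : nat * nat -> C :=
  fun p => x (p.1.+1, p.2).

End L2.

From Pilot Require Import Defs.
From HB Require Import structures.
From mathcomp Require Import all_boot all_order all_algebra.
From mathcomp Require Import complex.
From mathcomp Require Import all_classical all_reals all_analysis.
From mathcomp Require Import ring lra.
From Stdlib Require Cantor.

Set Implicit Arguments.
Unset Strict Implicit.
Unset Printing Implicit Defensive.
Import Order.TTheory GRing.Theory Num.Theory.
Import numFieldNormedType.Exports.
Local Open Scope classical_set_scope.
Local Open Scope ring_scope.

(* Rota's model.  Scale T to G := c T with ||G y||^2 <= ||y||^2 / 2.  Then
   x |-> (G^n x)_n is an isomorphism of l^2(I) onto a closed subspace M of
   l^2(nat, l^2(I)), and it turns G into the backward shift; hence the shift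
   restricted to M is similar to c T.  The four operators of (i) are backward
   shifts of infinite multiplicity: after a reindexing I ~ nat * K with K ~ I
   they shift the nat coordinate.  For a commuting pair (S1, S2) the map
   x |-> (G1^n G2^m x)_(n,m) turns G1 and G2 into the two shifts of
   l^2(nat * nat, l^2(I)), which is what L_{B_oo} and R_{B_oo^*} are up to
   reindexing.  On C_2(l^2) = l^2(nat * nat), by contrast, the joint kernel of
   L_B and R_{B^*} is spanned by e_(0,0), and an intertwiner of the pair with
   the zero pair would map l^2(nat * nat) injectively into it. *)

Section esum_lemmas.
Context {R : realType}.
Local Open Scope ereal_scope.

Lemma esumZl_le (T : choiceType) (S : set T) (k : R) (a : T -> \bar R) :
  (0 <= k)%R -> (forall x, 0 <= a x) ->
  \esum_(i in S) (k%:E * a i) <= k%:E * \esum_(i in S) a i.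
Proof.
move=> k0 a0; apply: ge_ereal_sup => _ [X [finX XS] <-].
rewrite -ge0_mule_fsumr // lee_wpmul2l ?lee_fin //.
by apply: ereal_sup_ubound; exists X.
Qed.

Lemma le_esum_term (T : choiceType) (a : T -> \bar R) (i : T) :
  (forall x, 0 <= a x) -> a i <= \esum_(x in [set: T]) a x.
Proof.
move=> a0; apply: esum_ge; exists [set i]; last by rewrite fsbig_set1.
by split => //; exact: finite_set1.
Qed.

Lemma esum_bij (T T' : choiceType) (e : T -> T') (e' : T' -> T) (a : T' -> \bar R) :
  cancel e e' -> cancel e' e ->
  \esum_(j in [set: T']) a j = \esum_(i in [set: T]) a (e i).
Proof.
move=> eK e'K; apply: reindex_esum; split => // [x y _ _ /(congr1 e')|y _].
  by rewrite !eK.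
by exists (e' y); rewrite ?e'K.
Qed.

Lemma le_esum_comp_inj (T T' : choiceType) (e : T -> T') (a : T' -> \bar R) :
  injective e -> \esum_(i in [set: T]) a (e i) <= \esum_(j in [set: T']) a j.
Proof.
move=> ie; rewrite -(esum_image setT e a); last by move=> x y _ _; exact: ie.
apply: ge_ereal_sup => _ [X [finX XA] <-].
by apply: ereal_sup_ubound; exists X.
Qed.

Lemma esum_pair (T1 T2 : choiceType) (a : T1 * T2 -> \bar R) :
  (forall x, 0 <= a x) ->
  \esum_(p in [set: T1 * T2]) a p =
  \esum_(i in [set: T1]) \esum_(j in [set: T2]) a (i, j).
Proof.
move=> a0; rewrite (@esum_esum R T1 T2 setT (fun=> setT) (fun i j => a (i, j))) //.
have -> : [set: T1] `*`` (fun=> [set: T2]) = [set: T1 * T2].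
  by apply/seteqP; split => // -[].
by apply: eq_esum => -[].
Qed.

Lemma esum_geometric (b : R) : (0 <= b)%R ->
  \esum_(n in [set: nat]) ((2^-1) ^+ n * b)%:E <= (2 * b)%:E.
Proof.
move=> b0.
have -> : \esum_(n in [set: nat]) ((2^-1) ^+ n * b)%:E =
          \esum_(n in [set: nat]) ((2 * b) / (2 ^ n.+1)%:R)%:E.
  apply: eq_esum => n _; congr (_%:E); rewrite natrX exprS exprVn; field.
  by rewrite expf_neq0.
rewrite -nneseries_esumT; last by move=> n; rewrite lee_fin divr_ge0 // mulr_ge0.
by apply: epsilon_trick0; rewrite mulr_ge0.
Qed.

End esum_lemmas.

Section sqmod_lemmas.
Context {R : realType}.
Local Notation C := (R[i]).

Lemma sqmodM (a z : C) : sqmod (a * z) = sqmod a * sqmod z.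
Proof. by case: a => a1 a2; case: z => z1 z2; rewrite /sqmod /=; ring. Qed.

Lemma sqmodD_le (a z : C) : sqmod (a + z) <= 2 * sqmod a + 2 * sqmod z.
Proof.
case: a => a1 a2; case: z => z1 z2; rewrite /sqmod /=.
have := sqr_ge0 (a1 - z1); have := sqr_ge0 (a2 - z2); nra.
Qed.

Lemma sqmod_ge0 (a : C) : 0 <= sqmod a.
Proof. by rewrite addr_ge0 ?sqr_ge0. Qed.

Lemma sqmodN (a : C) : sqmod (- a) = sqmod a.
Proof. by case: a => a1 a2; rewrite /sqmod /= !sqrrN. Qed.

Lemma sqmod0 : sqmod (0 : C) = 0.
Proof. by rewrite /sqmod /= expr0n addr0. Qed.

Lemma sqmod_eq0 (a : C) : sqmod a = 0 -> a = 0.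
Proof.
case: a => a1 a2; rewrite /sqmod /= => /eqP.
by rewrite paddr_eq0 ?sqr_ge0 // !sqrf_eq0 => /andP[/eqP -> /eqP ->].
Qed.

Lemma cconjK (a : C) : cconj (cconj a) = a.
Proof. by case: a => a1 a2; rewrite /cconj /= opprK. Qed.

End sqmod_lemmas.

Section nsq.
Context {R : realType} {I : choiceType}.
Local Notation C := (R[i]).
Local Notation vec := (I -> C).
Local Notation L2 := (@is_l2 R I).

Definition nsq (f : vec) : \bar R := (\esum_(i in [set: I]) (sqmod (f i))%:E)%E.

Lemma nsq_ge0 (f : vec) : (0 <= nsq f)%E.
Proof. by apply: esum_ge0 => x _; rewrite lee_fin sqmod_ge0. Qed.

Lemma sqmod_le_nsq (f : vec) i : ((sqmod (f i))%:E <= nsq f)%E.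
Proof.
by apply: (@le_esum_term _ _ (fun i => (sqmod (f i))%:E)) => x; rewrite lee_fin sqmod_ge0.
Qed.

Lemma nsq_fine (f : vec) : L2 f -> nsq f = (fine (nsq f))%:E.
Proof. by move=> hf; rewrite fineK // ge0_fin_numE //; exact: nsq_ge0. Qed.

Lemma fine_nsq_ge0 (f : vec) : 0 <= fine (nsq f).
Proof. exact/fine_ge0/nsq_ge0. Qed.

Lemma l2norm_sqr (f : vec) : l2norm f ^+ 2 = fine (nsq f).
Proof. exact/sqr_sqrtr/fine_nsq_ge0. Qed.

Lemma nsq_vlin_le (a : C) (f g : vec) :
  (nsq (vlin a f g) <= (2 * sqmod a)%:E * nsq f + 2%:E * nsq g)%E.
Proof.
have sq0 x : (0 <= (sqmod x)%:E)%E by rewrite lee_fin sqmod_ge0.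
apply: (@le_trans _ _ (\esum_(i in [set: I])
    ((2 * sqmod a)%:E * (sqmod (f i))%:E + 2%:E * (sqmod (g i))%:E))%E).
  apply: le_esum => i _; rewrite -!EFinM -EFinD lee_fin /vlin.
  by apply: le_trans (sqmodD_le _ _) _; rewrite sqmodM mulrA.
rewrite esumD => [|i _|i _]; last 2 first.
- by rewrite mule_ge0 // lee_fin mulr_ge0 ?sqmod_ge0.
- by rewrite mule_ge0 // lee_fin.
by apply: leeD; apply: esumZl_le; rewrite ?mulr_ge0 ?sqmod_ge0.
Qed.

Lemma nsq_vscale_le (a : C) (f : vec) : (nsq (vscale a f) <= (sqmod a)%:E * nsq f)%E.
Proof.
apply: (@le_trans _ _ (\esum_(i in [set: I]) ((sqmod a)%:E * (sqmod (f i))%:E))%E).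
  by apply: le_esum => i _; rewrite -EFinM lee_fin /vscale sqmodM.
by apply: esumZl_le => [|x]; rewrite ?lee_fin sqmod_ge0.
Qed.

Lemma nsq_vzero : nsq (vzero R) = 0%E.
Proof. by apply: esum1 => i _; rewrite /vzero sqmod0. Qed.

Lemma nsq_eq0 (f : vec) : nsq f = 0%E -> f = vzero R.
Proof.
move=> f0; apply/funext => i; apply: sqmod_eq0; apply/eqP.
by rewrite eq_le sqmod_ge0 andbT -lee_fin; have := sqmod_le_nsq f i; rewrite f0.
Qed.

Lemma is_l2_vlin (a : C) (f g : vec) : L2 f -> L2 g -> L2 (vlin a f g).
Proof.
move=> hf hg; apply: le_lt_trans (nsq_vlin_le a f g) _.
by rewrite (nsq_fine hf) (nsq_fine hg) -!EFinM -EFinD ltry.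
Qed.

Lemma is_l2_vscale (a : C) (f : vec) : L2 f -> L2 (vscale a f).
Proof.
move=> hf; apply: le_lt_trans (nsq_vscale_le a f) _.
by rewrite (nsq_fine hf) -EFinM ltry.
Qed.

Lemma is_l2_vzero : L2 (vzero R).
Proof. by rewrite /is_l2 -/(nsq _) nsq_vzero ltry. Qed.

Lemma vsubE (f g : vec) : vsub f g = vlin (-1) g f.
Proof. by apply/funext => i; rewrite /vsub /vlin mulN1r addrC. Qed.

Lemma vscaleE a (f : vec) : vscale a f = vlin a f (vzero R).
Proof. by apply/funext => i; rewrite /vscale /vlin /vzero addr0. Qed.

Lemma is_l2_vsub (f g : vec) : L2 f -> L2 g -> L2 (vsub f g).
Proof. by move=> hf hg; rewrite vsubE; apply: is_l2_vlin. Qed.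

Lemma l2norm_le (f g : vec) (k : R) : L2 f -> L2 g -> 0 <= k ->
  (nsq g <= k%:E * nsq f)%E -> l2norm g <= Num.sqrt k * l2norm f.
Proof.
move=> hf hg k0; rewrite (nsq_fine hf) (nsq_fine hg) -EFinM lee_fin => gf.
by rewrite /l2norm -/(nsq _) -/(nsq _) -sqrtrM // ler_wsqrtr.
Qed.

Lemma nsq_le (f g : vec) (k : R) : L2 f -> L2 g ->
  l2norm g <= k * l2norm f -> (nsq g <= (k ^+ 2)%:E * nsq f)%E.
Proof.
move=> hf hg gf; rewrite (nsq_fine hf) (nsq_fine hg) -EFinM lee_fin.
rewrite -!l2norm_sqr -exprMn ler_sqr ?nnegrE //; first exact: sqrtr_ge0.
exact: le_trans (sqrtr_ge0 _) gf.
Qed.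

Lemma lin_on_vzero (T : vec -> vec) : lin_on L2 T -> T (vzero R) = vzero R.
Proof.
move=> HT; have := HT (-1) _ _ is_l2_vzero is_l2_vzero.
have -> : vlin (-1) (vzero R) (vzero R) = vzero R :> vec.
  by apply/funext => i; rewrite /vlin /vzero mulr0 addr0.
move=> T0; apply/funext => i; have := congr1 (fun F => F i) T0.
by rewrite /vlin mulN1r => ->; rewrite addNr.
Qed.

Lemma sqmod_le_fine_nsq (f : vec) i : L2 f -> sqmod (f i) <= fine (nsq f).
Proof. by move=> hf; rewrite -lee_fin -nsq_fine // sqmod_le_nsq. Qed.

Lemma fine_nsq_le (f g : vec) (k : R) : L2 f -> L2 g ->
  (nsq g <= k%:E * nsq f)%E -> fine (nsq g) <= k * fine (nsq f).
Proof. by move=> hf hg; rewrite {1}(nsq_fine hf) {1}(nsq_fine hg) -EFinM lee_fin. Qed.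

Lemma lin_on_vsub (T : vec -> vec) (f g : vec) : lin_on L2 T -> L2 f -> L2 g ->
  T (vsub f g) = vsub (T f) (T g).
Proof. by move=> HT hf hg; rewrite !vsubE; apply: HT. Qed.

Lemma lin_on_vscale (T : vec -> vec) (a : C) (f : vec) : lin_on L2 T -> L2 f ->
  T (vscale a f) = vscale a (T f).
Proof.
move=> HT hf; rewrite !vscaleE HT //; last exact: is_l2_vzero.
by rewrite lin_on_vzero.
Qed.

End nsq.

Section closed_kernel.
Context {R : realType} {I : choiceType}.
Local Notation C := (R[i]).
Local Notation vec := (I -> C).
Local Notation L2 := (@is_l2 R I).

Lemma le0_nsq_cvg0 (u : nat -> vec) (d K : R) :
  (fun n => l2norm (u n)) @ \oo --> 0 ->
  (forall n, d <= K * fine (nsq (u n))) -> d <= 0.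
Proof.
move=> u0 du.
have cv : (fun n => K * (l2norm (u n) * l2norm (u n))) @ \oo --> K * (0 * 0).
  by apply: cvgM; [exact: cvg_cst | exact: cvgM].
rewrite mul0r mulr0 in cv; rewrite -(cvg_lim _ cv) //.
apply: limr_ge; first exact: cvgP cv.
by apply: nearW => n; rewrite -expr2 l2norm_sqr.
Qed.

Lemma kernel_closed (phi : vec -> C) (K : R) (u : nat -> vec) (x : vec) :
  (forall f g, L2 f -> L2 g -> phi (vsub f g) = phi f - phi g) ->
  (forall f, L2 f -> sqmod (phi f) <= K * fine (nsq f)) ->
  (forall n, L2 (u n) /\ phi (u n) = 0) -> L2 x ->
  (fun n => l2norm (vsub (u n) x)) @ \oo --> 0 -> phi x = 0.
Proof.
move=> phiB phiK hu hx ux; apply: sqmod_eq0; apply/eqP.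
rewrite eq_le sqmod_ge0 andbT; apply: le0_nsq_cvg0 ux _ => n.
have [hun phiun] := hu n.
by rewrite -sqmodN -sub0r -phiun -phiB //; apply: phiK; exact: is_l2_vsub.
Qed.

End closed_kernel.

Section similar_restriction.
Context {R : realType} {I : choiceType}.
Local Notation C := (R[i]).
Local Notation vec := (I -> C).
Local Notation L2 := (@is_l2 R I).

Definition similar_restriction (U T : vec -> vec) : Prop :=
  exists (M : set vec) (c : C) (J : vec -> vec),
    [/\ closed_subspace M, Defs.invariant U M, c != 0, lin_iso M L2 J &
        forall f, M f -> J (U f) = vscale c (T (J f))].

Definition similar_restriction2 (U1 U2 S1 S2 : vec -> vec) : Prop :=
  exists (c : C) (M : set vec) (V : vec -> vec),
    [/\ c != 0, closed_subspace M, Defs.invariant U1 M /\ Defs.invariant U2 M,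
        lin_iso L2 M V &
        forall f, L2 f ->
          U1 (V f) = vscale c (V (S1 f)) /\ U2 (V f) = vscale c (V (S2 f))].

End similar_restriction.

Section orbit_model.
Context {R : realType} {I N K : choiceType}.
Local Notation C := (R[i]).
Local Notation vec := (I -> C).
Local Notation L2 := (@is_l2 R I).

(* [ix] identifies l^2(I) with l^2(N, l^2(K)) and [jx] identifies l^2(K)
   with l^2(I); [orbit x] is the vector (P n x)_n and [orbit_head] reads
   off its [n0]-th component. *)
Variables (ix : N * K -> I) (ixV : I -> N * K) (jx : K -> I) (jxV : I -> K).
Hypotheses (ixK : cancel ix ixV) (ixVK : cancel ixV ix).
Hypotheses (jxK : cancel jx jxV) (jxVK : cancel jxV jx).
Variables (P : N -> vec -> vec) (n0 : N) (b : R).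
Hypothesis P_n0 : forall x, P n0 x = x.
Hypothesis is_l2_P : forall n x, L2 x -> L2 (P n x).
Hypothesis lin_on_P : forall n, lin_on L2 (P n).
Hypothesis b_ge0 : 0 <= b.
Hypothesis esum_nsq_P_le :
  forall x, L2 x -> (\esum_(n in [set: N]) nsq (P n x) <= b%:E * nsq x)%E.

Definition orbit (x : vec) : vec := fun i => P (ixV i).1 x (jx (ixV i).2).

Definition orbit_head (f : vec) : vec := fun i => f (ix (n0, jxV i)).

Definition orbit_space : set vec :=
  [set f | L2 f /\ forall n k, f (ix (n, k)) = P n (orbit_head f) (jx k)].

Lemma orbit_ix x n k : orbit x (ix (n, k)) = P n x (jx k).
Proof. by rewrite /orbit ixK. Qed.

Lemma nsq_orbit x : nsq (orbit x) = (\esum_(n in [set: N]) nsq (P n x))%E.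
Proof.
rewrite /nsq (esum_bij _ ixK ixVK) esum_pair => [|p]; last by rewrite lee_fin sqmod_ge0.
apply: eq_esum => n _; rewrite [RHS](esum_bij _ jxK jxVK).
by apply: eq_esum => k _; rewrite orbit_ix.
Qed.

Lemma nsq_orbit_le x : L2 x -> (nsq (orbit x) <= b%:E * nsq x)%E.
Proof. by move=> hx; rewrite nsq_orbit; exact: esum_nsq_P_le. Qed.

Lemma is_l2_orbit x : L2 x -> L2 (orbit x).
Proof.
move=> hx; apply: le_lt_trans (nsq_orbit_le hx) _.
by rewrite (nsq_fine hx) -EFinM ltry.
Qed.

Lemma nsq_P_le n x : L2 x -> (nsq (P n x) <= b%:E * nsq x)%E.
Proof.
move=> hx; apply: le_trans (esum_nsq_P_le hx).
by apply: (@le_esum_term _ _ (fun n => nsq (P n x))) => m; exact: nsq_ge0.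
Qed.

Lemma orbitK : cancel orbit orbit_head.
Proof. by move=> x; apply/funext => i; rewrite /orbit_head orbit_ix P_n0 jxVK. Qed.

Lemma orbit_headK f : orbit_space f -> orbit (orbit_head f) = f.
Proof.
move=> [_ Mf]; apply/funext => i; rewrite -(ixVK i).
by case: (ixV i) => n k; rewrite orbit_ix Mf.
Qed.

Lemma orbit_space_orbit x : L2 x -> orbit_space (orbit x).
Proof. by move=> hx; split => [|n k]; rewrite ?orbitK ?orbit_ix //; exact: is_l2_orbit. Qed.

Lemma nsq_orbit_head_le f : (nsq (orbit_head f) <= nsq f)%E.
Proof.
apply: (@le_esum_comp_inj _ _ _ (fun i => ix (n0, jxV i)) (fun j => (sqmod (f j))%:E)).
by move=> i j /(congr1 ixV); rewrite !ixK => -[] /(congr1 jx); rewrite !jxVK.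
Qed.

Lemma is_l2_orbit_head f : L2 f -> L2 (orbit_head f).
Proof. exact: le_lt_trans (nsq_orbit_head_le f). Qed.

Lemma lin_on_orbit : lin_on L2 orbit.
Proof. by move=> a f g hf hg; apply/funext => i; rewrite /orbit lin_on_P. Qed.

Lemma closed_orbit_space : closed_subspace orbit_space.
Proof.
split=> [f [] //| | a f g [hf Mf] [hg Mg] | u x hu hx ux].
- split=> [|n k]; first exact: is_l2_vzero.
  by rewrite (_ : orbit_head _ = vzero R) // lin_on_vzero.
- split=> [|n k]; first exact: is_l2_vlin.
  rewrite (_ : orbit_head _ = vlin a (orbit_head f) (orbit_head g)) //.
  have [hhf hhg] := (is_l2_orbit_head hf, is_l2_orbit_head hg).
  by rewrite lin_on_P // /vlin /= Mf Mg.
split=> // n k; apply/eqP; rewrite -subr_eq0; apply/eqP.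
apply: (@kernel_closed _ _ (fun f => f (ix (n, k)) - P n (orbit_head f) (jx k))
  (2 + 2 * b) u) => // [f g hf hg | f hf | j].
- rewrite (_ : orbit_head _ = vsub (orbit_head f) (orbit_head g)) //.
  have [hhf hhg] := (is_l2_orbit_head hf, is_l2_orbit_head hg).
  by rewrite lin_on_vsub // /vsub; ring.
- have hhf := is_l2_orbit_head hf.
  have Pf := sqmod_le_fine_nsq (jx k) (is_l2_P n hhf).
  have Pb := fine_nsq_le hhf (is_l2_P n hhf) (nsq_P_le n hhf).
  have : fine (nsq (orbit_head f)) <= 1 * fine (nsq f).
    by apply: fine_nsq_le; rewrite // mul1e nsq_orbit_head_le.
  rewrite mul1r => /(ler_wpM2l b_ge0) hb.
  have := sqmod_le_fine_nsq (ix (n, k)) hf.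
  move: (sqmodD_le (f (ix (n, k))) (- P n (orbit_head f) (jx k))); rewrite sqmodN mulrDl; lra.
- by have [hj Mj] := hu j; rewrite Mj subrr.
Qed.

Lemma lin_iso_orbit_head : lin_iso orbit_space L2 orbit_head.
Proof.
split=> [f [hf _] | a f g _ _ // | g hg | ]; first exact: is_l2_orbit_head.
  by exists (orbit g); [exact: orbit_space_orbit | exact: orbitK].
exists 1, (Num.sqrt b) => f Mf; have hf := Mf.1; split.
  rewrite -sqrtr1; apply: l2norm_le; rewrite ?mul1e ?nsq_orbit_head_le //.
  exact: is_l2_orbit_head.
rewrite -{1}(orbit_headK Mf); have hhf := is_l2_orbit_head hf.
by apply: l2norm_le; rewrite ?nsq_orbit_le //; exact: is_l2_orbit.
Qed.

Lemma lin_iso_orbit : lin_iso L2 orbit_space orbit.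
Proof.
split=> [x hx | | f Mf | ]; first exact: orbit_space_orbit.
- exact: lin_on_orbit.
- by exists (orbit_head f); [exact: is_l2_orbit_head Mf.1 | exact: orbit_headK].
exists (Num.sqrt b), 1 => x hx; have hox := is_l2_orbit hx; split.
  by apply: l2norm_le; rewrite ?nsq_orbit_le.
rewrite -sqrtr1; apply: l2norm_le; rewrite // mul1e.
by rewrite -[X in (nsq X <= _)%E]orbitK nsq_orbit_head_le.
Qed.

Section intertwining.
Variables (s : N -> N) (c : C) (T U : vec -> vec).
Hypothesis U_shift : forall f n k, U f (ix (n, k)) = f (ix (s n, k)).
Hypothesis P_shift : forall n x, L2 x -> P (s n) x = vscale c (P n (T x)).
Hypothesis is_l2_T : forall x, L2 x -> L2 (T x).

Lemma orbit_intertwine x : L2 x -> U (orbit x) = vscale c (orbit (T x)).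
Proof.
move=> hx; apply/funext => i; rewrite -(ixVK i); case: (ixV i) => n k.
by rewrite U_shift !orbit_ix P_shift // /vscale orbit_ix.
Qed.

Lemma invariant_orbit_space : Defs.invariant U orbit_space.
Proof.
move=> f Mf; have hhf := is_l2_orbit_head Mf.1.
rewrite -(orbit_headK Mf) orbit_intertwine // vscaleE.
have [_ M0 Mlin _] := closed_orbit_space.
by apply: Mlin => //; apply: orbit_space_orbit; exact: is_l2_T.
Qed.

Lemma orbit_head_intertwine f :
  orbit_space f -> orbit_head (U f) = vscale c (T (orbit_head f)).
Proof.
move=> Mf; rewrite -{1}(orbit_headK Mf) orbit_intertwine //; last exact: is_l2_orbit_head Mf.1.
by apply/funext => i; rewrite /vscale /orbit_head orbit_ix P_n0 jxVK.
Qed.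

Lemma similar_restriction_orbit : c != 0 -> similar_restriction U T.
Proof.
exists orbit_space, c, orbit_head; split=> //.
- exact: closed_orbit_space.
- exact: invariant_orbit_space.
- exact: lin_iso_orbit_head.
- exact: orbit_head_intertwine.
Qed.

End intertwining.

Lemma similar_restriction2_orbit (s1 s2 : N -> N) (c : C) (S1 S2 U1 U2 : vec -> vec) :
  c != 0 ->
  (forall f n k, U1 f (ix (n, k)) = f (ix (s1 n, k))) ->
  (forall f n k, U2 f (ix (n, k)) = f (ix (s2 n, k))) ->
  (forall n x, L2 x -> P (s1 n) x = vscale c (P n (S1 x))) ->
  (forall n x, L2 x -> P (s2 n) x = vscale c (P n (S2 x))) ->
  (forall x, L2 x -> L2 (S1 x)) -> (forall x, L2 x -> L2 (S2 x)) ->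
  similar_restriction2 U1 U2 S1 S2.
Proof.
move=> c0 U1_shift U2_shift P_shift1 P_shift2 S1l2 S2l2.
exists c, orbit_space, orbit; split=> //.
- exact: closed_orbit_space.
- by split; apply: invariant_orbit_space; eassumption.
- exact: lin_iso_orbit.
- by move=> f hf; split; apply: orbit_intertwine.
Qed.

End orbit_model.

Section contraction.
Context {R : realType} {I : choiceType}.
Local Notation C := (R[i]).
Local Notation vec := (I -> C).
Local Notation L2 := (@is_l2 R I).

Definition half_contraction (G : vec -> vec) : Prop :=
  [/\ forall y, L2 y -> L2 (G y), lin_on L2 G &
      forall y, L2 y -> (nsq (G y) <= (2^-1)%:E * nsq y)%E].

Definition shrink (k : R) : C := complex.Complex (k + 1)^-1 0.

Lemma shrink_neq0 k : 0 <= k -> shrink k != 0.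
Proof. by move=> k0; apply/eqP => -[] /eqP; rewrite invr_eq0 gt_eqF // ltr_wpDl. Qed.

Lemma sqmod_shrink_le k a : 0 <= k -> a <= k -> sqmod (shrink k) * a <= 2^-1.
Proof.
move=> k0 ak; rewrite /sqmod /= expr0n addr0.
set r := (k + 1)^-1.
have r0 : 0 < r by rewrite invr_gt0 ltr_wpDl.
have rk : r * (k + 1) = 1 by rewrite mulVf // gt_eqF // ltr_wpDl.
have := ler_wpM2l (sqr_ge0 r) ak; nra.
Qed.

Lemma bounded_op_shrink (T : vec -> vec) : bounded_op T ->
  exists2 k0, 0 <= k0 &
    forall k, k0 <= k -> half_contraction (fun y => vscale (shrink k) (T y)).
Proof.
case=> Tl2 Tlin [k1 Tk1]; exists (k1 ^+ 2) => [|k k1k]; first exact: sqr_ge0.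
have k0 := le_trans (sqr_ge0 k1) k1k.
split=> [y hy | a f g hf hg | y hy].
- exact/is_l2_vscale/Tl2.
- by rewrite Tlin //; apply/funext => i; rewrite /vscale /vlin /=; ring.
- apply: le_trans (nsq_vscale_le _ _) _.
  apply: le_trans (lee_wpmul2l _ (nsq_le hy (Tl2 y hy) (Tk1 y hy))) _.
    by rewrite lee_fin sqmod_ge0.
  rewrite muleA -EFinM lee_wpmul2r ?nsq_ge0 // lee_fin.
  exact: sqmod_shrink_le.
Qed.

Section iterates.
Variable G : vec -> vec.
Hypothesis HG : half_contraction G.

Lemma is_l2_iter n x : L2 x -> L2 (iter n G x).
Proof. by case: HG => Gl2 _ _; elim: n => [|n IH] //= /IH; exact: Gl2. Qed.

Lemma lin_on_iter n : lin_on L2 (iter n G).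
Proof.
case: HG => _ Glin _; elim: n => [|n IH] a f g hf hg //=.
by rewrite IH // Glin //; exact: is_l2_iter.
Qed.

Lemma nsq_iter_le n x : L2 x -> (nsq (iter n G x) <= ((2^-1) ^+ n)%:E * nsq x)%E.
Proof.
case: HG => _ _ Gc; elim: n => [|n IH] hx /=; first by rewrite expr0 mul1e.
apply: le_trans (Gc _ (is_l2_iter n hx)) _.
by rewrite exprS EFinM -muleA lee_wpmul2l ?lee_fin ?invr_ge0 // IH.
Qed.

Lemma esum_nsq_iter_le x : L2 x ->
  (\esum_(n in [set: nat]) nsq (iter n G x) <= 2%:E * nsq x)%E.
Proof.
move=> hx; apply: le_trans (_ : _ <= \esum_(n in [set: nat]) ((2^-1) ^+ n * fine (nsq x))%:E)%E _.
  by apply: le_esum => n _; rewrite EFinM -(nsq_fine hx) nsq_iter_le.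
by rewrite (nsq_fine hx) -EFinM; apply: esum_geometric; exact: fine_nsq_ge0.
Qed.

End iterates.

Lemma esum_nsq_iter2_le (G1 G2 : vec -> vec) x :
  half_contraction G1 -> half_contraction G2 -> L2 x ->
  (\esum_(p in [set: nat * nat]) nsq (iter p.1 G1 (iter p.2 G2 x))
     <= (2 * 2)%:E * nsq x)%E.
Proof.
move=> HG1 HG2 hx; rewrite esum_pair => [|p]; last exact: nsq_ge0.
have b0 : 0 <= 2 * fine (nsq x) by rewrite mulr_ge0 ?fine_nsq_ge0.
rewrite (nsq_fine hx) -EFinM -mulrA.
apply: le_trans (esum_geometric b0) => /=; apply: le_esum => n _.
apply: le_trans (_ : _ <= \esum_(m in [set: nat]) ((2^-1) ^+ n)%:E * nsq (iter m G2 x))%E _.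
  by apply: le_esum => m _; apply: nsq_iter_le => //; exact: is_l2_iter.
apply: le_trans (esumZl_le _ _ (fun m => nsq_ge0 (iter m G2 x))) _.
  by rewrite exprn_ge0 ?invr_ge0.
rewrite EFinM lee_wpmul2l ?lee_fin ?exprn_ge0 ?invr_ge0 //.
by rewrite EFinM -(nsq_fine hx) esum_nsq_iter_le.
Qed.

End contraction.

Lemma iter_comm {R : realType} {I : choiceType} (A G : (I -> R[i]) -> I -> R[i]) n x :
  (forall y, is_l2 y -> is_l2 (G y)) -> (forall y, is_l2 y -> A (G y) = G (A y)) ->
  is_l2 x -> A (iter n G x) = iter n G (A x).
Proof.
move=> Gl2 AG hx; elim: n => [|n IH] //=.
by rewrite AG -?IH //; elim: n {IH} => [|n IH] //=; exact: Gl2.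
Qed.

Section commuting_pair_iterates.
Context {R : realType} {I : choiceType}.
Local Notation vec := (I -> R[i]).
Local Notation L2 := (@is_l2 R I).
Variables (c : R[i]) (S1 S2 : vec -> vec).
Local Notation G1 := (fun y => vscale c (S1 y)).
Local Notation G2 := (fun y => vscale c (S2 y)).
Hypotheses (HG1 : half_contraction G1) (HG2 : half_contraction G2).
Hypotheses (S1l2 : forall x, L2 x -> L2 (S1 x)) (S2l2 : forall x, L2 x -> L2 (S2 x)).
Hypothesis S1lin : lin_on L2 S1.
Hypothesis S12 : forall x, L2 x -> S1 (S2 x) = S2 (S1 x).

Lemma iter2_shiftl n m x : L2 x ->
  iter n.+1 G1 (iter m G2 x) = vscale c (iter n G1 (iter m G2 (S1 x))).
Proof.
have [G2l2 _ _] := HG2.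
have S1G2 y : L2 y -> S1 (G2 y) = G2 (S1 y).
  by move=> hy; rewrite lin_on_vscale ?S12 //; exact: S2l2.
move=> hx; rewrite iterSr (iter_comm _ G2l2 S1G2 hx) lin_on_vscale //.
  exact: lin_on_iter.
by apply: is_l2_iter => //; exact: S1l2.
Qed.

Lemma iter2_shiftr n m x : L2 x ->
  iter n G1 (iter m.+1 G2 x) = vscale c (iter n G1 (iter m G2 (S2 x))).
Proof.
move=> hx; have hS2x := S2l2 hx.
rewrite iterSr !lin_on_vscale //; try exact: lin_on_iter.
exact: is_l2_iter.
Qed.

End commuting_pair_iterates.

Section backward_shift.
Context {R : realType} {I K : choiceType}.
Local Notation vec := (I -> R[i]).
Local Notation L2 := (@is_l2 R I).
Variables (jx : K -> I) (jxV : I -> K).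
Hypotheses (jxK : cancel jx jxV) (jxVK : cancel jxV jx).

Theorem universal_backward_shift (ix : nat * K -> I) (ixV : I -> nat * K) (U : vec -> vec) :
  cancel ix ixV -> cancel ixV ix -> bounded_op U ->
  (forall f n k, U f (ix (n, k)) = f (ix (n.+1, k))) -> universal U.
Proof.
move=> ixK ixVK HU U_shift; split=> // T HT; have [Tl2 _ _] := HT.
have [k0 k0_ge0 /(_ k0 (lexx k0)) HG] := bounded_op_shrink HT.
apply: (similar_restriction_orbit ixK ixVK jxK jxVK (n0 := 0%N) (b := 2)
          (P := fun n => iter n (fun y => vscale (shrink k0) (T y))) _ _ _ _ _ U_shift)
  => // [n x|n|x|n x hx|].
- exact: is_l2_iter.
- exact: lin_on_iter.
- exact: esum_nsq_iter_le.
- by rewrite iterSr lin_on_vscale //; [exact: lin_on_iter | exact: Tl2].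
- exact: shrink_neq0.
Qed.

Theorem universal_commuting_pair_backward_shift
    (ix : (nat * nat) * K -> I) (ixV : I -> (nat * nat) * K) (U1 U2 : vec -> vec) :
  cancel ix ixV -> cancel ixV ix -> commuting_pair U1 U2 ->
  (forall f n m k, U1 f (ix ((n, m), k)) = f (ix ((n.+1, m), k))) ->
  (forall f n m k, U2 f (ix ((n, m), k)) = f (ix ((n, m.+1), k))) ->
  universal_commuting_pair U1 U2.
Proof.
move=> ixK ixVK HU U1_shift U2_shift; split=> // S1 S2 [HS1 HS2 S12].
have [[S1l2 S1lin _] [S2l2 _ _]] := (HS1, HS2).
have [k1 k1_ge0 HG1] := bounded_op_shrink HS1.
have [k2 k2_ge0 HG2] := bounded_op_shrink HS2.
set c := shrink (k1 + k2).
have /HG1 {}HG1 : k1 <= k1 + k2 by rewrite lerDl.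
have /HG2 {}HG2 : k2 <= k1 + k2 by rewrite lerDr.
set G1 := fun y => vscale c (S1 y) in HG1 *.
set G2 := fun y => vscale c (S2 y) in HG2 *.
have c0 : c != 0 by apply: shrink_neq0; rewrite addr_ge0.
have Pl2 m x : L2 x -> L2 (iter m G2 x) by exact: is_l2_iter.
have U1s f p k : U1 f (ix (p, k)) = f (ix ((p.1.+1, p.2), k)).
  by case: p => n m; rewrite U1_shift.
have U2s f p k : U2 f (ix (p, k)) = f (ix ((p.1, p.2.+1), k)).
  by case: p => n m; rewrite U2_shift.
apply: (similar_restriction2_orbit ixK ixVK jxK jxVK (n0 := (0, 0)%N) (b := 2 * 2)
          (P := fun p x => iter p.1 G1 (iter p.2 G2 x)) _ _ _ _ _ c0 U1s U2s)
  => // [[n m] x hx|[n m]|x|[n m] x hx|[n m] x hx].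
- by apply: is_l2_iter => //; exact: Pl2.
- by move=> a f g hf hg; rewrite (lin_on_iter HG2) // (lin_on_iter HG1) //; exact: Pl2.
- exact: esum_nsq_iter2_le.
- exact: iter2_shiftl.
- exact: iter2_shiftr.
Qed.

End backward_shift.

Section linear_maps.
Context {R : realType} {I : choiceType}.
Local Notation C := (R[i]).
Local Notation vec := (I -> C).
Local Notation L2 := (@is_l2 R I).

Lemma bounded_op_vzero : bounded_op (fun _ : vec => vzero R).
Proof.
split=> [f _ | a f g _ _ | ]; first exact: is_l2_vzero.
  by apply/funext => i; rewrite /vlin /vzero mulr0 addr0.
exists 1 => f _; rewrite /l2norm -/(nsq _) nsq_vzero sqrtr0 mul1r.
exact: sqrtr_ge0.
Qed.

Lemma lin_iso_inj (M : set vec) (V : vec -> vec) f :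
  lin_iso L2 M V -> L2 f -> V f = vzero R -> f = vzero R.
Proof.
move=> [_ _ _ [k1 [k2 Vk]]] hf Vf0; apply: nsq_eq0; rewrite (nsq_fine hf).
have [_] := Vk f hf; rewrite Vf0 {2}/l2norm -/(nsq _) nsq_vzero sqrtr0 mulr0.
rewrite -(ler_pXn2r (ltn0Sn 1)) ?nnegrE ?sqrtr_ge0 // expr0n /= l2norm_sqr => f0.
by congr (_%:E); apply/eqP; rewrite eq_le f0 fine_nsq_ge0.
Qed.

Definition unit_vec (q : I) : vec := fun p => if p == q then 1 else 0.

Lemma unit_vec_neq0 q : unit_vec q != vzero R.
Proof.
by apply/eqP => /(congr1 (fun f => f q)); rewrite /unit_vec eqxx => /eqP; rewrite oner_eq0.
Qed.

Lemma is_l2_unit_vec q : L2 (unit_vec q).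
Proof.
rewrite /is_l2 -/(nsq _); suff -> : nsq (unit_vec q) = 1%E by rewrite ltry.
rewrite /nsq (esumID [set q]) ?setTI; last by move=> p _; rewrite lee_fin sqmod_ge0.
rewrite esum_set1 ?lee_fin ?sqmod_ge0 // esum1 ?adde0 => [|p pq].
  by rewrite /unit_vec eqxx /sqmod /= expr1n expr0n addr0.
by rewrite /unit_vec; case: eqP => [/pq|_] //; rewrite sqmod0.
Qed.

Lemma lin_functional_not_inj (phi : vec -> C) (q1 q2 : I) : q1 != q2 ->
  (forall a f g, L2 f -> L2 g -> phi (vlin a f g) = a * phi f + phi g) ->
  exists f, [/\ L2 f, f != vzero R & phi f = 0].
Proof.
move=> q12 phi_lin; have [e1 e2] := (is_l2_unit_vec q1, is_l2_unit_vec q2).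
have [phi1|phi1] := eqVneq (phi (unit_vec q1)) 0.
  by exists (unit_vec q1); split=> //; exact: unit_vec_neq0.
exists (vlin (phi (unit_vec q1)) (unit_vec q2) (vscale (- phi (unit_vec q2)) (unit_vec q1))).
split; first by apply: is_l2_vlin => //; exact: is_l2_vscale.
  apply/eqP => /(congr1 (fun f => f q2)); rewrite /vlin /vscale /vzero /unit_vec.
  by rewrite eqxx eq_sym (negPf q12) mulr1 mulr0 addr0; exact/eqP.
have phi0 : phi (vzero R) = 0.
  have := phi_lin (-1) _ _ is_l2_vzero is_l2_vzero.
  rewrite (_ : vlin _ _ _ = vzero R) ?mulN1r ?addNr //.
  by apply/funext => i; rewrite /vlin /vzero mulr0 addr0.
have e1s : L2 (vscale (- phi (unit_vec q2)) (unit_vec q1)) by exact: is_l2_vscale.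
rewrite (phi_lin _ _ _ e2 e1s) vscaleE (phi_lin _ _ _ e1 is_l2_vzero) phi0.
by rewrite addr0 mulNr mulrC addrN.
Qed.
End linear_maps.

Section two_sided_shift.
Context {R : realType}.
Local Notation C := (R[i]).
Local Notation vec := (nat * nat -> C).
Local Notation L2 := (@is_l2 R (nat * nat)%type).
Variables U1 U2 : vec -> vec.
Hypothesis U1_shift : forall f i j, U1 f (i, j) = f (i.+1, j).
Hypothesis U2_shift : forall f i j, U2 f (i, j) = f (i, j.+1).

Lemma joint_kernel_shift g : U1 g = vzero R -> U2 g = vzero R ->
  forall p, p != (0, 0)%N -> g p = 0.
Proof.
move=> g1 g2 [[|i] [|j]] // _.
- by rewrite -U2_shift g2.
- by rewrite -U1_shift g1.
- by rewrite -U1_shift g1.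
Qed.

Theorem not_universal_commuting_pair_shift : ~ universal_commuting_pair U1 U2.
Proof.
move=> [_ ucp]; have zero_pair : commuting_pair (fun _ : vec => vzero R) (fun _ => vzero R).
  by split=> //; exact: bounded_op_vzero.
have [c [M [V [_ _ _ HV Vshift]]]] := ucp _ _ zero_pair; have [_ Vlin _ _] := HV.
have Vsupp f : L2 f -> forall p, p != (0, 0)%N -> V f p = 0.
  move=> hf; have [V1 V2] := Vshift f hf.
  by apply: joint_kernel_shift; rewrite ?V1 ?V2 lin_on_vzero // /vscale /vzero;
    apply/funext => p; rewrite mulr0.
have [f [hf f0 Vf0]] : exists f, [/\ L2 f, f != vzero R & V f (0, 0)%N = 0].
  apply: (@lin_functional_not_inj _ _ (fun f => V f (0, 0)%N) (0, 0)%N (1, 0)%N) => //.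
  by move=> a f g hf hg; rewrite Vlin.
move/eqP: f0; apply; apply: (lin_iso_inj HV hf); apply/funext => p.
by have [->|p0] := eqVneq p (0, 0)%N; [exact: Vf0 | exact: Vsupp].
Qed.

End two_sided_shift.

Lemma bounded_op_reindex {R : realType} {I : choiceType} (e : I -> I)
    (U : (I -> R[i]) -> I -> R[i]) :
  injective e -> (forall f i, U f i = f (e i)) -> bounded_op U.
Proof.
move=> ie Ue; have {}Ue f : U f = f \o e by apply/funext => i; exact: Ue.
have nsqU f : (nsq (U f) <= nsq f)%E.
  by rewrite Ue; exact: (@le_esum_comp_inj _ _ _ _ (fun j => (sqmod (f j))%:E)).
have Ul2 f : is_l2 f -> is_l2 (U f) by exact: le_lt_trans (nsqU f).
split=> // [a f g _ _ | ]; first by rewrite !Ue.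
exists 1 => f hf; rewrite -sqrtr1.
by apply: l2norm_le; rewrite ?mul1e ?nsqU //; exact: Ul2.
Qed.

Section shifts.
Context {R : realType}.
Local Notation C := (R[i]).

Lemma Lmul_bshiftE (f : nat * nat -> C) i j : Lmul (@bshift R) f (i, j) = f (i.+1, j).
Proof. by []. Qed.

Lemma Radj_bshiftE (f : nat * nat -> C) i j : Radj (@bshift R) f (i, j) = f (i, j.+1).
Proof. by rewrite /Radj /adjmx /Lmul /bshift /= cconjK. Qed.

Lemma Lmul_bshift_infE (f : (nat * nat) * (nat * nat) -> C) i j q :
  Lmul (@bshift_inf R) f ((i, j), q) = f ((i.+1, j), q).
Proof. by []. Qed.

Lemma Radj_bshift_infE (f : (nat * nat) * (nat * nat) -> C) q i j :
  Radj (@bshift_inf R) f (q, (i, j)) = f (q, (i.+1, j)).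
Proof. by rewrite /Radj /adjmx /Lmul /bshift_inf /= cconjK. Qed.

Lemma bounded_op_Lmul_bshift : bounded_op (Lmul (@bshift R)).
Proof.
by apply: (@bounded_op_reindex _ _ (fun p => (p.1.+1, p.2))) => [[a b] [c d] [-> ->]|].
Qed.

Lemma bounded_op_Radj_bshift : bounded_op (Radj (@bshift R)).
Proof.
apply: (@bounded_op_reindex _ _ (fun p => (p.1, p.2.+1))) => [[a b] [c d] [-> ->]|f [i j]] //.
exact: Radj_bshiftE.
Qed.

Lemma bounded_op_Lmul_bshift_inf : bounded_op (Lmul (@bshift_inf R)).
Proof.
apply: (@bounded_op_reindex _ _ (fun p => ((p.1.1.+1, p.1.2), p.2))) => //.
by move=> [[a b] q] [[c d] q'] [-> -> ->].
Qed.

Lemma bounded_op_Radj_bshift_inf : bounded_op (Radj (@bshift_inf R)).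
Proof.
apply: (@bounded_op_reindex _ _ (fun p => (p.1, (p.2.1.+1, p.2.2)))) => [|f [q [i j]]].
  by move=> [q [a b]] [q' [c d]] [-> -> ->].
exact: Radj_bshift_infE.
Qed.

Local Notation of_nat := Cantor.of_nat.
Local Notation to_nat := Cantor.to_nat.
Local Notation of_natK := Cantor.cancel_to_of.
Local Notation to_natK := Cantor.cancel_of_to.

Lemma universal_Lmul_bshift : universal (Lmul (@bshift R)).
Proof.
apply: (@universal_backward_shift _ _ _ of_nat to_nat of_natK to_natK id id) => //.
exact: bounded_op_Lmul_bshift.
Qed.

Lemma universal_Radj_bshift : universal (Radj (@bshift R)).
Proof.
apply: (@universal_backward_shift _ _ _ of_nat to_nat of_natK to_natK
          (fun p => (p.2, p.1)) (fun p => (p.2, p.1))) => [[] | [] | | f n k] //.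
- exact: bounded_op_Radj_bshift.
- exact: Radj_bshiftE.
Qed.

Lemma universal_Lmul_bshift_inf : universal (Lmul (@bshift_inf R)).
Proof.
apply: (@universal_backward_shift _ _ (nat * (nat * nat))%type
          (fun k => (of_nat k.1, k.2))
          (fun i : (nat * nat) * (nat * nat) => (to_nat i.1, i.2)) _ _
          (fun p => ((p.1, p.2.1), p.2.2))
          (fun i : (nat * nat) * (nat * nat) => (i.1.1, (i.1.2, i.2))))
  => [[a b] /= | [a b] /= | [? []] | [[]] | | ] //.
- by rewrite of_natK.
- by rewrite to_natK.
- exact: bounded_op_Lmul_bshift_inf.
Qed.

Lemma universal_Radj_bshift_inf : universal (Radj (@bshift_inf R)).
Proof.
apply: (@universal_backward_shift _ _ ((nat * nat) * nat)%type
          (fun k => (k.1, of_nat k.2))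
          (fun i : (nat * nat) * (nat * nat) => (i.1, to_nat i.2)) _ _
          (fun p => (p.2.1, (p.1, p.2.2)))
          (fun i : (nat * nat) * (nat * nat) => (i.2.1, (i.1, i.2.2))))
  => [[a b] /= | [a b] /= | [? [? ?]] | [? []] | | f n [q j]] //.
- by rewrite of_natK.
- by rewrite to_natK.
- exact: bounded_op_Radj_bshift_inf.
- exact: Radj_bshift_infE.
Qed.

Lemma commuting_pair_bshift : commuting_pair (Lmul (@bshift R)) (Radj (@bshift R)).
Proof.
split=> [||f _]; [exact: bounded_op_Lmul_bshift | exact: bounded_op_Radj_bshift |].
by apply/funext => -[i j]; rewrite Lmul_bshiftE !Radj_bshiftE.
Qed.

Lemma commuting_pair_bshift_inf :
  commuting_pair (Lmul (@bshift_inf R)) (Radj (@bshift_inf R)).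
Proof.
split=> [||f _]; [exact: bounded_op_Lmul_bshift_inf | exact: bounded_op_Radj_bshift_inf |].
by apply/funext => -[[a b] [c d]]; rewrite Lmul_bshift_infE !Radj_bshift_infE.
Qed.

Lemma universal_commuting_pair_bshift_inf :
  universal_commuting_pair (Lmul (@bshift_inf R)) (Radj (@bshift_inf R)).
Proof.
apply: (@universal_commuting_pair_backward_shift _ _ (nat * nat)%type
          (fun k => (of_nat k.1, of_nat k.2))
          (fun i : (nat * nat) * (nat * nat) => (to_nat i.1, to_nat i.2)) _ _
          (fun p => ((p.1.1, p.2.1), (p.1.2, p.2.2)))
          (fun i : (nat * nat) * (nat * nat) => ((i.1.1, i.2.1), (i.1.2, i.2.2))))
  => [[a b] /= | [a b] /= | [[? ?] [? ?]] | [[? ?] [? ?]] | | | f n m [j l]] //.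
- by rewrite !of_natK.
- by rewrite !to_natK.
- exact: commuting_pair_bshift_inf.
- exact: Radj_bshift_infE.
Qed.

End shifts.

Theorem theorem4p3 (R : realType) :
  (universal (Lmul (@bshift R)) /\ universal (Radj (@bshift R)) /\
   universal (Lmul (@bshift_inf R)) /\ universal (Radj (@bshift_inf R))) /\
  (commuting_pair (Lmul (@bshift R)) (Radj (@bshift R)) /\
   ~ universal_commuting_pair (Lmul (@bshift R)) (Radj (@bshift R))) /\
  universal_commuting_pair (Lmul (@bshift_inf R)) (Radj (@bshift_inf R)).
Proof.
split; last split.
- split; first exact: universal_Lmul_bshift.
  split; first exact: universal_Radj_bshift.
  by split; [exact: universal_Lmul_bshift_inf | exact: universal_Radj_bshift_inf].
- split; first exact: commuting_pair_bshift.
  by apply: not_universal_commuting_pair_shift; [exact: Lmul_bshiftE | exact: Radj_bshiftE].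
- exact: universal_commuting_pair_bshift_inf.
Qed.
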